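(* Let $\Diamond_{ij;kl}$ be a hinge of a geodesic triangulation of a hyperbolic polyhedral surface with circle radii $r_k,r_i,r_l,r_j>0$ and inversive distances $a=I_{ki},b=I_{il},c=I_{lj},d=I_{jk},e=I_{ij}>1$, and suppose the orthogonal circles of both faces $f_{ijk}$ and $f_{ijl}$ are compact. Then the edge $e_{ij}$ is local weighted Delaunay, i.e. $h_{ij,k}+h_{ij,l}\ge 0$, if and only if $$\frac{\sqrt{\Delta_{bce}}}{\tanh r_k}+\frac{\sqrt{\Delta_{ade}}}{\tanh r_l}\le\frac{\sqrt{\Delta_{cdf}}}{\tanh r_i}+\frac{\sqrt{\Delta_{abf}}}{\tanh r_j},$$ where $f=\dfrac{ab+cd+ace+bde+\sqrt{\Delta_{ade}}\sqrt{\Delta_{bce}}}{e^2-1}$.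
   Context: A hinge $\Diamond_{ij;kl}$ consists of an edge $e_{ij}$ with its two adjacent faces $f_{ijk},f_{ijl}$; lengths are $l_{\alpha\beta}=\operatorname{arccosh}(\cosh r_\alpha\cosh r_\beta+I_{\alpha\beta}\sinh r_\alpha\sinh r_\beta)$. $\Delta_{abc}=a^2+b^2+c^2+2abc-1$. Orthogonal circle of a face: develop the face isometrically into the Poincaré disk $\mathbb D$; the vertex circles are Euclidean circles and the orthogonal circle is the unique Euclidean circle orthogonal to all three; it is compact if contained in $\mathbb D$, and then it is a hyperbolic circle with center $O_{ijk}$ and radius $\rho_{ijk}$ with $\cosh d(O_{ijk},v_\alpha)=\cosh r_\alpha\cosh\rho_{ijk}$, $\alpha=i,j,k$. $h_{ij,k}$ is the hyperbolic distance from $O_{ijk}$ to the geodesic containing $e_{ij}$, taken positive if $O_{ijk}$ and $v_k$ are on the same side of $e_{ij}$ and negative otherwise (computed in a local development). The edge $e_{ij}$ is local weighted Delaunay if $h_{ij,k}+h_{ij,l}\ge0$. *)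

From HB Require Import structures.
From mathcomp Require Import all_boot all_order all_algebra.
From mathcomp Require Import all_classical all_reals.
From mathcomp Require Import sequences exp.
Set Implicit Arguments. Unset Strict Implicit. Unset Printing Implicit Defensive.
Import Order.TTheory GRing.Theory Num.Theory.
Local Open Scope classical_set_scope.
Local Open Scope ring_scope.

Section Hyp.
Variable R : realType.

Definition coshR (x : R) : R := (expR x + expR (- x)) / 2.
Definition sinhR (x : R) : R := (expR x - expR (- x)) / 2.
Definition tanhR (x : R) : R := sinhR x / coshR x.
Definition arcoshR (y : R) : R := ln (y + Num.sqrt (y ^+ 2 - 1)).

Record vec3 := V3 { c0 : R; c1 : R; c2 : R }.

Definition lor (p q : vec3) : R := - c0 p * c0 q + c1 p * c1 q + c2 p * c2 q.

(* upper sheet of the hyperboloid = hyperbolic plane H^2 *)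
Definition inH2 (p : vec3) : Prop := lor p p = -1 /\ 0 < c0 p.

Definition hdist (p q : vec3) : R := arcoshR (- lor p q).

Definition det3 (p q s : vec3) : R :=
  c0 p * (c1 q * c2 s - c2 q * c1 s)
  - c0 q * (c1 p * c2 s - c2 p * c1 s)
  + c0 s * (c1 p * c2 q - c2 p * c1 q).

(* the geodesic through vi, vj : H^2 intersected with span(vi, vj) *)
Definition onGeod (vi vj q : vec3) : Prop :=
  inH2 q /\ exists s t : R,
    [/\ c0 q = s * c0 vi + t * c0 vj, c1 q = s * c1 vi + t * c1 vj
      & c2 q = s * c2 vi + t * c2 vj].

Definition distGeod (vi vj p : vec3) : R :=
  inf [set hdist p q | q in onGeod vi vj].

(* signed distance h_{ij,k} from O to the geodesic e_ij: positive when O and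
   vk lie on the same side (the side of a point x is the sign of det[vi vj x]) *)
Definition hsigned (vi vj vk O : vec3) : R :=
  (if 0 <= det3 vi vj O * det3 vi vj vk then 1 else -1) * distGeod vi vj O.

Definition elen (r1 r2 I : R) : R :=
  arcoshR (coshR r1 * coshR r2 + I * sinhR r1 * sinhR r2).

Definition Delta (a b c : R) : R := a ^+ 2 + b ^+ 2 + c ^+ 2 + 2 * a * b * c - 1.

(* O, rho : center and radius of the (compact) orthogonal circle of the face
   with vertices v1 v2 v3 and vertex-circle radii r1 r2 r3 *)
Definition orthCircle (v1 v2 v3 : vec3) (r1 r2 r3 : R) (O : vec3) (rho : R) : Prop :=
  [/\ inH2 O, 0 < rho,
      coshR (hdist O v1) = coshR r1 * coshR rho,
      coshR (hdist O v2) = coshR r2 * coshR rho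
    & coshR (hdist O v3) = coshR r3 * coshR rho].

End Hyp.

From HB Require Import structures.
From mathcomp Require Import all_boot all_order all_algebra.
From mathcomp Require Import all_classical all_reals.
From mathcomp Require Import sequences exp.
From mathcomp Require Import ring lra.
Import Order.TTheory GRing.Theory Num.Theory.
Local Open Scope ring_scope.

(* In the hyperboloid model, the signed distance from the centre O of an
   orthogonal circle to the geodesic through vi, vj is an odd increasing function
   of the coordinate det3 vi vj O * sgn (det3 vi vj vk), so the sign of
   h_ij,k + h_ij,l is the sign of the sum of the two coordinates.  Gram
   determinants of vi, vj, vk, O express each coordinate as a positive multiple of
   L / sqrt (Delta M - L^2), where L is linear in the inversive distances; since
   t / sqrt (M - t^2) is again odd and increasing, the sign is that of
   L_k sqrt Delta_bce + L_l sqrt Delta_ade.  Writing sqrt Delta_cdf and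
   sqrt Delta_abf linearly in sqrt Delta_ade and sqrt Delta_bce, this is
   sinh r_i sinh r_j (e^2 - 1) times the difference of the two sides of the
   inequality. *)

Section HyperbolicHinge.
Context {R : realType}.
Implicit Types (w x y z r : R) (p q s u v : vec3 R).

Lemma coshE r : coshR r = (expR r + (expR r)^-1) / 2.
Proof. by rewrite /coshR expRN. Qed.

Lemma sinhE r : sinhR r = (expR r - (expR r)^-1) / 2.
Proof. by rewrite /sinhR expRN. Qed.

Lemma cosh_ge1 r : 1 <= coshR r.
Proof.
rewrite coshE; have E0 := expR_gt0 r.
have -> : (expR r + (expR r)^-1) / 2 = 1 + (expR r - 1) ^+ 2 / expR r / 2.
  by field; rewrite gt_eqF.
by rewrite lerDl !divr_ge0 ?sqr_ge0 // ltW.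
Qed.

Lemma cosh_gt0 r : 0 < coshR r.
Proof. exact: lt_le_trans ltr01 (cosh_ge1 r). Qed.

Lemma sinh_gt0 r : 0 < r -> 0 < sinhR r.
Proof.
move=> r0; rewrite sinhE.
have E1 : 1 < expR r by rewrite expR_gt1.
have : (expR r)^-1 < 1 by rewrite invf_lt1 //; lra.
lra.
Qed.

Lemma cosh_arcosh y : 1 <= y -> coshR (arcoshR y) = y.
Proof.
move=> y1; rewrite coshE /arcoshR.
set s := Num.sqrt (y ^+ 2 - 1).
have s0 : 0 <= s by apply: sqrtr_ge0.
have ss : s ^+ 2 = y ^+ 2 - 1 by rewrite sqr_sqrtr // subr_ge0; nra.
have ys0 : y + s != 0 by rewrite gt_eqF //; lra.
rewrite lnK ?posrE; last lra.
(* (y + s)(y - s) = 1 *)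
have -> : (y + s)^-1 = y - s by apply: (mulfI ys0); rewrite mulfV //; nra.
lra.
Qed.

Lemma arcosh_lt y z : 1 <= y -> y < z -> arcoshR y < arcoshR z.
Proof.
move=> y1 yz; rewrite /arcoshR ltr_ln ?posrE; last 2 first.
- have := sqrtr_ge0 (y ^+ 2 - 1); lra.
- have := sqrtr_ge0 (z ^+ 2 - 1); lra.
by apply: ltr_leD => //; rewrite ler_sqrt; nra.
Qed.

Lemma arcosh_le y z : 1 <= y -> y <= z -> arcoshR y <= arcoshR z.
Proof.
move=> y1; rewrite le_eqVlt => /predU1P[-> // | yz].
exact/ltW/arcosh_lt.
Qed.

Lemma arcosh1 : arcoshR (1 : R) = 0.
Proof. by rewrite /arcoshR expr1n subrr sqrtr0 addr0 ln1. Qed.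

Lemma sqrt_ge1 x : 1 <= x -> 1 <= Num.sqrt x.
Proof. by move=> h; rewrite -sqrtr1 ler_sqrt //; lra. Qed.

Lemma elenC r1 r2 I : elen r1 r2 I = elen r2 r1 I.
Proof. by rewrite /elen; congr arcoshR; ring. Qed.

Definition lcross p q : vec3 R :=
  V3 (- (c1 p * c2 q - c2 p * c1 q)) (c0 q * c2 p - c0 p * c2 q)
     (c0 p * c1 q - c0 q * c1 p).

Definition vcomb x p y q : vec3 R :=
  V3 (x * c0 p + y * c0 q) (x * c1 p + y * c1 q) (x * c2 p + y * c2 q).

Definition det33 (a11 a12 a13 a21 a22 a23 a31 a32 a33 : R) : R :=
  a11 * (a22 * a33 - a23 * a32) - a12 * (a21 * a33 - a23 * a31)
  + a13 * (a21 * a32 - a22 * a31).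

Definition det44 (a11 a12 a13 a14 a21 a22 a23 a24
                  a31 a32 a33 a34 a41 a42 a43 a44 : R) : R :=
  a11 * det33 a22 a23 a24 a32 a33 a34 a42 a43 a44
  - a12 * det33 a21 a23 a24 a31 a33 a34 a41 a43 a44
  + a13 * det33 a21 a22 a24 a31 a32 a34 a41 a42 a44
  - a14 * det33 a21 a22 a23 a31 a32 a33 a41 a42 a43.

Lemma lorC p q : lor p q = lor q p.
Proof. by case: p q => [? ? ?] [? ? ?]; rewrite /lor /=; ring. Qed.

Lemma lor_combl x p y q s : lor (vcomb x p y q) s = x * lor p s + y * lor q s.
Proof. by case: p q s => [? ? ?] [? ? ?] [? ? ?]; rewrite /lor /=; ring. Qed.

Lemma lor_combr x p y q s : lor s (vcomb x p y q) = x * lor s p + y * lor s q.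
Proof. by case: p q s => [? ? ?] [? ? ?] [? ? ?]; rewrite /lor /=; ring. Qed.

Lemma det3_lcross p q s : det3 p q s = lor (lcross p q) s.
Proof. by case: p q s => [? ? ?] [? ? ?] [? ? ?]; rewrite /det3 /lor /=; ring. Qed.

Lemma lor_lcrossl p q : lor (lcross p q) p = 0.
Proof. by case: p q => [? ? ?] [? ? ?]; rewrite /lor /=; ring. Qed.

Lemma lor_lcrossr p q : lor (lcross p q) q = 0.
Proof. by case: p q => [? ? ?] [? ? ?]; rewrite /lor /=; ring. Qed.

Lemma lor_lcross_self p q :
  lor (lcross p q) (lcross p q) = lor p q ^+ 2 - lor p p * lor q q.
Proof. by case: p q => [? ? ?] [? ? ?]; rewrite /lor /=; ring. Qed.

(* The Lorentz form has determinant -1, hence the sign in front of the Gram determinant. *)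
Lemma det3_gram p q s u :
  det3 p q s * det3 p q u =
  - det33 (lor p p) (lor p q) (lor p u) (lor q p) (lor q q) (lor q u)
          (lor s p) (lor s q) (lor s u).
Proof.
by case: p q s u => [? ? ?] [? ? ?] [? ? ?] [? ? ?]; rewrite /det3 /det33 /lor /=; ring.
Qed.

(* Four vectors of R^3 are linearly dependent. *)
Lemma gram4_eq0 p q s u :
  det44 (lor p p) (lor p q) (lor p s) (lor p u) (lor q p) (lor q q) (lor q s) (lor q u)
        (lor s p) (lor s q) (lor s s) (lor s u) (lor u p) (lor u q) (lor u s) (lor u u) = 0.
Proof.
by case: p q s u => [? ? ?] [? ? ?] [? ? ?] [? ? ?]; rewrite /det44 /det33 /lor /=; ring.
Qed.

(* Projection of [s] onto the plane [span(p, q)] along its Lorentz normal. *)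
Definition lproj p q s : vec3 R :=
  vcomb 1 s (- (lor (lcross p q) s / lor (lcross p q) (lcross p q))) (lcross p q).

Lemma lproj_span p q s : lor (lcross p q) (lcross p q) != 0 ->
  exists x y, [/\ c0 (lproj p q s) = x * c0 p + y * c0 q,
                  c1 (lproj p q s) = x * c1 p + y * c1 q
                & c2 (lproj p q s) = x * c2 p + y * c2 q].
Proof.
set w := lor (lcross p q) (lcross p q) => w0.
exists ((lor p q * lor s q - lor q q * lor s p) / w).
exists ((lor p q * lor s p - lor p p * lor s q) / w).
move: w0; rewrite /w /lproj; clear w.
by case: p q s => [? ? ?] [? ? ?] [? ? ?]; rewrite /lor /= => w0; split; field.
Qed.

(* Reverse Cauchy-Schwarz: [(c0 p c0 q)^2 - (1 + c1 p c1 q + c2 p c2 q)^2] is a sum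
   of squares (Lagrange identity). *)
Lemma H2_lor_le {p q} : inH2 p -> inH2 q -> 1 <= - lor p q.
Proof.
case: p q => [p0 p1 p2] [q0 q1 q2]; rewrite /inH2 /lor /= => [[hp p0g]] [hq q0g].
set u := p1 * q1 + p2 * q2.
have gap : (p0 * q0) ^+ 2 - (1 + u) ^+ 2
           = (p1 - q1) ^+ 2 + (p2 - q2) ^+ 2 + (p1 * q2 - p2 * q1) ^+ 2.
  have ep : p0 ^+ 2 = 1 + p1 ^+ 2 + p2 ^+ 2 by lra.
  have eq : q0 ^+ 2 = 1 + q1 ^+ 2 + q2 ^+ 2 by lra.
  by rewrite exprMn ep eq /u; ring.
have sq : (1 + u) ^+ 2 <= (p0 * q0) ^+ 2.
  by rewrite -subr_ge0 gap !addr_ge0 // sqr_ge0.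
have pq0 : 0 < p0 * q0 by rewrite mulr_gt0.
have : 1 + u <= p0 * q0.
  case: (lerP (1 + u) 0) => h; first lra.
  by rewrite -(ler_pXn2r (n := 2)) // ?nnegrE; lra.
rewrite /u; lra.
Qed.

Lemma hdistC p q : hdist p q = hdist q p.
Proof. by rewrite /hdist lorC. Qed.

Lemma lor_of_cosh_hdist {p q y} : inH2 p -> inH2 q -> coshR (hdist p q) = y -> lor p q = - y.
Proof. by move=> hp hq; rewrite /hdist cosh_arcosh ?H2_lor_le //; lra. Qed.

Lemma H2_or_opp {p} : lor p p = -1 -> inH2 p \/ inH2 (vcomb (-1) p 0 p).
Proof.
move=> pp; case: (ltrgtP 0 (c0 p)) => [c0p | c0n | c00]; first by left.
  by right; split; rewrite ?lor_combl ?lor_combr ?pp /=; lra.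
by move: pp; rewrite /lor -c00; have := sqr_ge0 (c1 p); have := sqr_ge0 (c2 p); nra.
Qed.

Definition geodPhi (w x : R) := arcoshR (Num.sqrt (1 + x ^+ 2 / w)).

Lemma geodPhi_ge1 w x : 0 < w -> 1 <= Num.sqrt (1 + x ^+ 2 / w).
Proof. by move=> w0; apply: sqrt_ge1; rewrite lerDl divr_ge0 ?sqr_ge0 // ltW. Qed.

Section Geodesic.
Variables (vi vj O : vec3 R).
Hypothesis hO : inH2 O.
Let W := lcross vi vj.
Let w := lor W W.
Let D := det3 vi vj O.
Hypothesis w0 : 0 < w.

Lemma hdist_geod_ge q : onGeod vi vj q -> geodPhi w D <= hdist O q.
Proof.
move=> [hq [s [t [e0 e1 e2]]]].
have Wq : lor W q = 0.
  have -> : lor W q = s * lor W vi + t * lor W vj by rewrite /lor e0 e1 e2; ring.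
  by rewrite lor_lcrossl lor_lcrossr; ring.
have WO : lor W O = D by rewrite /D det3_lcross.
have g := det3_gram O q W W.
rewrite /det33 (proj1 hO) (proj1 hq) (lorC q W) Wq (lorC O W) WO -/w in g.
rewrite (lorC q O) in g; set L := lor O q in g *.
(* [det3 O q W ^+ 2 >= 0], written as a Gram determinant, is the distance bound. *)
have L2 : 1 + D ^+ 2 / w <= L ^+ 2.
  have : 0 <= det3 O q W * det3 O q W by rewrite -expr2 sqr_ge0.
  rewrite g => gram.
  suff : D ^+ 2 / w <= L ^+ 2 - 1 by lra.
  by rewrite ler_pdivrMr //; lra.
have hL : 1 <= - L by apply: H2_lor_le.
rewrite /hdist -/L; apply: arcosh_le; first exact: geodPhi_ge1.
rewrite -(ger0_norm (x := - L)); last lra.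
by rewrite -sqrtr_sqr sqrrN ler_sqrt //; nra.
Qed.

Lemma geod_foot : exists2 q, onGeod vi vj q & hdist O q = geodPhi w D.
Proof.
(* the foot of the perpendicular is the normalized projection of [O] *)
set m := Num.sqrt (1 + D ^+ 2 / w).
have m1 : 1 <= m by apply: geodPhi_ge1.
have m2 : m ^+ 2 = 1 + D ^+ 2 / w.
  by rewrite sqr_sqrtr // addr_ge0 ?divr_ge0 ?sqr_ge0 ?ltW.
have m0 : m != 0 by rewrite lt0r_neq0 // (lt_le_trans ltr01 m1).
have w0' : w != 0 by rewrite gt_eqF.
have WO : lor W O = D by rewrite /D det3_lcross.
have [x [y [P0 P1 P2]]] := lproj_span vi vj O w0'.
set P := lproj vi vj O in P0 P1 P2.
have OP : lor O P = - m ^+ 2.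
  by rewrite /P /lproj lor_combr (proj1 hO) (lorC O W) WO -/W -/w m2; field.
have WP : lor W P = 0.
  by rewrite /P /lproj lor_combr -/W -/w WO; field.
have PP : lor P P = - m ^+ 2.
  by rewrite {1}/P /lproj lor_combl -/W WP OP; ring.
set q0 := vcomb m^-1 P 0 P.
have Oq0 : lor O q0 = - m by rewrite (lor_combr m^-1 P 0 P) OP; field.
have q0q0 : lor q0 q0 = -1.
  by rewrite /q0 lor_combl (lor_combr m^-1 P 0 P) PP; field.
have q0H : inH2 q0.
  case: (H2_or_opp q0q0) => // hq0; have := H2_lor_le hO hq0.
  by rewrite (lor_combr (-1) q0 0 q0) Oq0; lra.
exists q0; last by rewrite /hdist Oq0 opprK.
split=> //; exists (m^-1 * x), (m^-1 * y); clearbody P.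
by rewrite /q0 /= P0 P1 P2; split; ring.
Qed.

Lemma distGeodE : distGeod vi vj O = geodPhi w D.
Proof.
have [q0 q0G q0d] := geod_foot.
have lb : lbound [set hdist O q | q in onGeod vi vj] (geodPhi w D).
  by move=> _ [q hq <-]; exact: hdist_geod_ge.
rewrite /distGeod; apply/le_anti/andP; split.
  by apply: ge_inf; [exists (geodPhi w D) | exists q0].
by apply: lb_le_inf => //; exists (geodPhi w D), q0.
Qed.

End Geodesic.

Lemma odd_incr_addr_ge0 (D : {pred R}) (g : R -> R) :
  {in D &, {homo g : x y / x < y}} -> {in D, forall x, - x \in D /\ g (- x) = - g x} ->
  {in D &, forall x y, (0 <= g x + g y) = (0 <= x + y)}.
Proof.
move=> g_incr g_odd x y xD yD; have [NyD gN] := g_odd y yD.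
by rewrite -[g y]opprK -gN subr_ge0 (le_mono_in g_incr) // -subr_ge0 opprK.
Qed.

Definition sgeodPhi (w x : R) := (if 0 <= x then 1 else -1) * geodPhi w x.

Lemma geodPhi_lt {w x y} : 0 < w -> x ^+ 2 < y ^+ 2 -> geodPhi w x < geodPhi w y.
Proof.
move=> w0 xy; apply: arcosh_lt; first exact: geodPhi_ge1.
rewrite ltr_sqrt ?ltrD2l ?ltr_pM2r ?invr_gt0 //.
by rewrite ltr_pwDl ?divr_ge0 ?sqr_ge0 ?ltW.
Qed.

Lemma geodPhi_ge0 {w} x : 0 < w -> 0 <= geodPhi w x.
Proof. by move=> w0; rewrite -arcosh1 arcosh_le ?geodPhi_ge1. Qed.

Lemma geodPhi0 w : geodPhi w 0 = 0.
Proof. by rewrite /geodPhi expr0n /= mul0r addr0 sqrtr1 arcosh1. Qed.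

Lemma geodPhiN w x : geodPhi w (- x) = geodPhi w x.
Proof. by rewrite /geodPhi sqrrN. Qed.

Lemma sgeodPhi_lt w x y : 0 < w -> x < y -> sgeodPhi w x < sgeodPhi w y.
Proof.
move=> w0 xy; rewrite /sgeodPhi.
case: (lerP 0 x) => hx; case: (lerP 0 y) => hy; rewrite ?mul1r ?mulN1r.
- by apply: geodPhi_lt => //; nra.
- lra.
- have x2 : 0 ^+ 2 < x ^+ 2 by nra.
  have := geodPhi_ge0 y w0; have := geodPhi_lt w0 x2.
  by rewrite geodPhi0; lra.
- by rewrite ltrN2; apply: geodPhi_lt => //; nra.
Qed.

Lemma sgeodPhiN w x : sgeodPhi w (- x) = - sgeodPhi w x.
Proof.
rewrite /sgeodPhi geodPhiN oppr_ge0.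
by case: (ltrgtP x 0) => [x0 | x0 | ->]; rewrite ?geodPhi0 ?mulr0 ?oppr0 //; ring.
Qed.

Lemma sgeodPhi_addr_ge0 w x y : 0 < w ->
  (0 <= sgeodPhi w x + sgeodPhi w y) = (0 <= x + y).
Proof.
move=> w0; apply: (@odd_incr_addr_ge0 predT) => // [u v _ _ | u _].
  exact: sgeodPhi_lt.
by rewrite sgeodPhiN.
Qed.

Lemma hsignedE {vi vj vk O} : inH2 O -> 0 < lor (lcross vi vj) (lcross vi vj) ->
  det3 vi vj vk != 0 ->
  hsigned vi vj vk O = sgeodPhi (lor (lcross vi vj) (lcross vi vj))
                         (det3 vi vj O * det3 vi vj vk / `|det3 vi vj vk|).
Proof.
move=> hO w0 dk0; rewrite /hsigned distGeodE // /sgeodPhi.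
have dk_gt0 : 0 < `|det3 vi vj vk| by rewrite normr_gt0.
have -> : (0 <= det3 vi vj O * det3 vi vj vk / `|det3 vi vj vk|)
          = (0 <= det3 vi vj O * det3 vi vj vk) by rewrite pmulr_lge0 ?invr_gt0.
rewrite /geodPhi; congr (_ * arcoshR (Num.sqrt (1 + _ / _))).
by rewrite !exprMn exprVn -normrX ger0_norm ?sqr_ge0 // mulfK // expf_neq0.
Qed.

Lemma elen_gt1 {r1 r2 I} : 0 < r1 -> 0 < r2 -> 0 < I ->
  1 < coshR r1 * coshR r2 + I * sinhR r1 * sinhR r2.
Proof.
move=> r10 r20 I0; have := mulr_gt0 (mulr_gt0 I0 (sinh_gt0 r1 r10)) (sinh_gt0 r2 r20).
have := cosh_ge1 r1; have := cosh_ge1 r2; nra.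
Qed.

Lemma lor_of_hdist_elen {p q r1 r2 I} : 0 < r1 -> 0 < r2 -> 0 < I -> inH2 p -> inH2 q ->
  hdist p q = elen r1 r2 I ->
  lor p q = - (coshR r1 * coshR r2 + I * sinhR r1 * sinhR r2).
Proof.
move=> r10 r20 I0 hp hq /(congr1 (@coshR R)); rewrite /elen cosh_arcosh.
  exact: lor_of_cosh_hdist.
exact/ltW/elen_gt1.
Qed.

Lemma lcross_self_gt0 {p q r1 r2 I} : 0 < r1 -> 0 < r2 -> 0 < I -> inH2 p -> inH2 q ->
  hdist p q = elen r1 r2 I -> 0 < lor (lcross p q) (lcross p q).
Proof.
move=> r10 r20 I0 hp hq /(lor_of_hdist_elen r10 r20 I0 hp hq) pq.
rewrite lor_lcross_self pq (proj1 hp) (proj1 hq).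
have := elen_gt1 r10 r20 I0; nra.
Qed.

(* [x^T adj(G) x] for the Gram-type matrix [G = [[1,p,q],[p,1,r],[q,r,1]]] *)
Definition gram_adjQ (xi xj xk p q r : R) : R :=
  xi ^+ 2 * (1 - r ^+ 2) + xj ^+ 2 * (1 - q ^+ 2) + xk ^+ 2 * (1 - p ^+ 2)
  + 2 * xi * xj * (q * r - p) + 2 * xi * xk * (p * r - q) + 2 * xj * xk * (p * q - r).

Definition faceL (xi xj xk si sj sk a d e : R) : R :=
  xi * sj * sk * (a + d * e) + si * xj * sk * (d + a * e) - si * sj * xk * (e ^+ 2 - 1).

Definition faceM (xi xj si sj e : R) : R :=
  xi ^+ 2 * sj ^+ 2 + 2 * e * xi * si * xj * sj + xj ^+ 2 * si ^+ 2.

Lemma gram_face {vi vj vk O} {p q r xi xj xk X : R} :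
  inH2 vi -> inH2 vj -> inH2 vk -> inH2 O ->
  lor vi vj = - p -> lor vi vk = - q -> lor vj vk = - r ->
  lor O vi = - (xi * X) -> lor O vj = - (xj * X) -> lor O vk = - (xk * X) ->
  det3 vi vj O * det3 vi vj vk = X * det33 1 p q p 1 r xi xj xk /\
  det3 vi vj vk ^+ 2 = X ^+ 2 * gram_adjQ xi xj xk p q r.
Proof.
move=> [ii _] [jj _] [kk _] [OO _] ij ik jk Oi Oj Ok.
have ji : lor vj vi = - p by rewrite lorC.
have ki : lor vk vi = - q by rewrite lorC.
have kj : lor vk vj = - r by rewrite lorC.
have iO : lor vi O = - (xi * X) by rewrite lorC.
have jO : lor vj O = - (xj * X) by rewrite lorC.
have kO : lor vk O = - (xk * X) by rewrite lorC.
have := gram4_eq0 vi vj vk O; have := det3_gram vi vj vk vk; have := det3_gram vi vj O vk.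
rewrite ii jj kk OO ij ik jk ji ki kj Oi Oj Ok iO jO kO.
move=> -> dk2 gram4; split; first by rewrite /det33; ring.
apply/eqP; rewrite expr2 dk2 -subr_eq0 -gram4; apply/eqP.
by rewrite /det44 /det33 /gram_adjQ; ring.
Qed.

Section Face.
Variables (ri rj rk a d e : R).
Let xi := coshR ri.
Let xj := coshR rj.
Let xk := coshR rk.
Let si := sinhR ri.
Let sj := sinhR rj.
Let sk := sinhR rk.
Let p := xi * xj + e * si * sj.
Let q := xi * xk + a * si * sk.
Let r := xj * xk + d * sj * sk.

Lemma face_det33 : det33 1 p q p 1 r xi xj xk = si * sj * faceL xi xj xk si sj sk a d e.
Proof.
rewrite /p /q /r /xi /xj /xk /si /sj /sk !coshE !sinhE /det33 /faceL.
by field; rewrite !gt_eqF ?expR_gt0.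
Qed.

Lemma face_adjQ : (e ^+ 2 - 1) * gram_adjQ xi xj xk p q r =
  Delta a d e * sk ^+ 2 * faceM xi xj si sj e - faceL xi xj xk si sj sk a d e ^+ 2.
Proof.
rewrite /p /q /r /xi /xj /xk /si /sj /sk !coshE !sinhE /gram_adjQ /faceL /faceM /Delta.
by field; rewrite !gt_eqF ?expR_gt0.
Qed.

Hypotheses (ri0 : 0 < ri) (rj0 : 0 < rj) (rk0 : 0 < rk).
Hypotheses (a0 : 0 < a) (d0 : 0 < d) (e1 : 1 < e).
Variables (vi vj vk O : vec3 R) (rho : R).
Hypotheses (hi : inH2 vi) (hj : inH2 vj) (hk : inH2 vk).
Hypotheses (dij : hdist vi vj = elen ri rj e) (dik : hdist vi vk = elen ri rk a).
Hypothesis djk : hdist vj vk = elen rj rk d.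
Hypothesis hO : orthCircle vi vj vk ri rj rk O rho.
Hypothesis dk0 : det3 vi vj vk != 0.
Let l := faceL xi xj xk si sj sk a d e / sk.
Let M := faceM xi xj si sj e.

Lemma face_coord : 0 < Delta a d e * M - l ^+ 2 /\
  det3 vi vj O * det3 vi vj vk / `|det3 vi vj vk|
  = si * sj * Num.sqrt (e ^+ 2 - 1) * (l / Num.sqrt (Delta a d e * M - l ^+ 2)).
Proof.
have [hOH _ Oi Oj Ok] := hO.
have e0 : 0 < e := lt_trans ltr01 e1.
have [DK dk2] := gram_face hi hj hk hOH
  (lor_of_hdist_elen ri0 rj0 e0 hi hj dij) (lor_of_hdist_elen ri0 rk0 a0 hi hk dik)
  (lor_of_hdist_elen rj0 rk0 d0 hj hk djk)
  (lor_of_cosh_hdist hOH hi Oi) (lor_of_cosh_hdist hOH hj Oj) (lor_of_cosh_hdist hOH hk Ok).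
rewrite face_det33 in DK.
set X := coshR rho in DK dk2.
set Q := gram_adjQ _ _ _ _ _ _ in dk2.
have X0 : 0 < X by apply: cosh_gt0.
have si0 : 0 < si by apply: sinh_gt0.
have sj0 : 0 < sj by apply: sinh_gt0.
have sk0 : 0 < sk by apply: sinh_gt0.
have e20 : 0 < e ^+ 2 - 1 by rewrite subr_gt0 exprn_egt1.
have Q0 : 0 < Q.
  have : 0 < det3 vi vj vk ^+ 2 by rewrite exprn_even_gt0.
  by rewrite dk2 pmulr_rgt0 // exprn_gt0.
have QE : Q = sk ^+ 2 * (Delta a d e * M - l ^+ 2) / (e ^+ 2 - 1).
  apply: (mulfI (lt0r_neq0 e20)); rewrite face_adjQ /l /M.
  by field; rewrite !lt0r_neq0.
have pos : 0 < Delta a d e * M - l ^+ 2.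
  by move: Q0; rewrite QE pmulr_lgt0 ?invr_gt0 // pmulr_rgt0 // exprn_gt0.
split=> //.
set S := Delta a d e * M - l ^+ 2 in pos QE *.
set E := e ^+ 2 - 1 in e20 QE *.
have S2 : Num.sqrt S ^+ 2 = S by rewrite sqr_sqrtr ?ltW.
have E2 : Num.sqrt E ^+ 2 = E by rewrite sqr_sqrtr ?ltW.
have s1 : 0 < Num.sqrt S by rewrite sqrtr_gt0.
have s2 : 0 < Num.sqrt E by rewrite sqrtr_gt0.
have normE : `|det3 vi vj vk| = X * sk * Num.sqrt S / Num.sqrt E.
  have rhs_ge0 : 0 <= X * sk * Num.sqrt S / Num.sqrt E.
    exact: divr_ge0 (mulr_ge0 (mulr_ge0 (ltW X0) (ltW sk0)) (ltW s1)) (ltW s2).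
  apply/eqP; rewrite -(eqrXn2 (n := 2)) //.
  rewrite real_normK ?num_real // dk2 QE -{1}S2 -{1}E2.
  by apply/eqP; field; rewrite lt0r_neq0.
by rewrite DK normE /l; field; rewrite !gt_eqF.
Qed.

End Face.

Lemma DeltaC x y z : Delta x y z = Delta y x z.
Proof. by rewrite /Delta; ring. Qed.

Lemma Delta_ge0 x y z : 1 <= x -> 0 <= y -> 0 <= z -> 0 <= Delta x y z.
Proof.
move=> x1 y0 z0; rewrite /Delta.
have := mulr_ge0 (mulr_ge0 (le_trans ler01 x1) y0) z0.
have := sqr_ge0 y; have := sqr_ge0 z; have := exprn_ege1 2 x1.
lra.
Qed.

Lemma Delta_gt0 x y z : 1 < x -> 1 < y -> 1 < z -> 0 < Delta x y z.
Proof.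
move=> x1 y1 z1; rewrite /Delta.
have := mulr_ge0 (mulr_ge0 (ltW (lt_trans ltr01 x1)) (ltW (lt_trans ltr01 y1)))
                 (ltW (lt_trans ltr01 z1)).
have := sqr_ge0 y; have := sqr_ge0 z; have : 1 < x ^+ 2 by rewrite exprn_egt1.
lra.
Qed.

Definition hinge_f (a b c d e : R) : R :=
  (a * b + c * d + a * c * e + b * d * e
   + Num.sqrt (Delta a d e) * Num.sqrt (Delta b c e)) / (e ^+ 2 - 1).

Lemma hinge_fC a b c d e : hinge_f d c b a e = hinge_f a b c d e.
Proof. by rewrite /hinge_f (DeltaC d) (DeltaC c); congr (_ / _); ring. Qed.

Lemma sqrt_Delta_hinge {a b c d e} : 1 <= a -> 1 <= b -> 1 <= c -> 1 <= d -> 1 < e ->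
  (a + d * e) * Num.sqrt (Delta b c e) + (b + c * e) * Num.sqrt (Delta a d e)
  = (e ^+ 2 - 1) * Num.sqrt (Delta c d (hinge_f a b c d e)).
Proof.
move=> a1 b1 c1 d1 e1.
have [a0 b0 c0 d0 e0] : [/\ 0 <= a, 0 <= b, 0 <= c, 0 <= d & 0 <= e] by split; lra.
have Dade : 0 <= Delta a d e by apply: Delta_ge0; lra.
have Dbce : 0 <= Delta b c e by apply: Delta_ge0; lra.
rewrite /hinge_f; set N := a * b + c * d + a * c * e + b * d * e.
set sk := Num.sqrt (Delta a d e); set sl := Num.sqrt (Delta b c e).
have sk0 : 0 <= sk by apply: sqrtr_ge0.
have sl0 : 0 <= sl by apply: sqrtr_ge0.
have E0 : 0 < e ^+ 2 - 1 by rewrite subr_gt0 exprn_egt1.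
have N0 : 0 <= N by rewrite /N !addr_ge0 ?mulr_ge0.
have f0 : 0 <= (N + sk * sl) / (e ^+ 2 - 1).
  exact: divr_ge0 (addr_ge0 N0 (mulr_ge0 sk0 sl0)) (ltW E0).
have Df : 0 <= Delta c d ((N + sk * sl) / (e ^+ 2 - 1)) by apply: Delta_ge0; lra.
apply: (pexpIrn (n := 2)); rewrite ?nnegrE //.
- by rewrite !addr_ge0 ?mulr_ge0 ?addr_ge0 ?mulr_ge0.
- by rewrite mulr_ge0 ?sqrtr_ge0 ?ltW.
(* both sides are quadratic in [sk] and [sl]; only [sk ^+ 2] and [sl ^+ 2] need substituting *)
rewrite exprMn sqr_sqrtr //.
have -> : (e ^+ 2 - 1) ^+ 2 * Delta c d ((N + sk * sl) / (e ^+ 2 - 1))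
  = (e ^+ 2 - 1) ^+ 2 * (c ^+ 2 + d ^+ 2 - 1) + N ^+ 2 + sk ^+ 2 * sl ^+ 2
    + 2 * (N + c * d * (e ^+ 2 - 1)) * (sk * sl) + 2 * c * d * (e ^+ 2 - 1) * N.
  by rewrite /Delta; field; rewrite gt_eqF.
have -> : ((a + d * e) * sl + (b + c * e) * sk) ^+ 2
  = (a + d * e) ^+ 2 * sl ^+ 2 + (b + c * e) ^+ 2 * sk ^+ 2
    + 2 * (a + d * e) * (b + c * e) * (sk * sl) by ring.
by rewrite !sqr_sqrtr // /Delta /N; ring.
Qed.

Lemma sqrt_Delta_hinge_sym {a b c d e} : 1 <= a -> 1 <= b -> 1 <= c -> 1 <= d -> 1 < e ->
  (d + a * e) * Num.sqrt (Delta b c e) + (c + b * e) * Num.sqrt (Delta a d e)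
  = (e ^+ 2 - 1) * Num.sqrt (Delta a b (hinge_f a b c d e)).
Proof.
move=> a1 b1 c1 d1 e1; rewrite -hinge_fC (DeltaC a b) -sqrt_Delta_hinge //.
by rewrite (DeltaC c) (DeltaC d) addrC.
Qed.

Definition psi (M w : R) := w / Num.sqrt (M - w ^+ 2).

Lemma psiN M w : psi M (- w) = - psi M w.
Proof. by rewrite /psi sqrrN mulNr. Qed.

Lemma psi_lt_nneg M w1 w2 : w2 ^+ 2 < M -> 0 <= w1 -> w1 < w2 -> psi M w1 < psi M w2.
Proof.
move=> h2 p1 l12; rewrite /psi.
have h1 : w1 ^+ 2 < M by nra.
have a2 : 0 < Num.sqrt (M - w2 ^+ 2) by rewrite sqrtr_gt0 subr_gt0.
have a12 : Num.sqrt (M - w2 ^+ 2) < Num.sqrt (M - w1 ^+ 2).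
  by rewrite ltr_sqrt ?subr_gt0 // ltrD2l ltrN2; nra.
apply: (le_lt_trans (y := w1 / Num.sqrt (M - w2 ^+ 2))).
  by rewrite ler_wpM2l // lef_pV2 ?posrE ?ltW // sqrtr_gt0 subr_gt0.
by rewrite ltr_pM2r ?invr_gt0.
Qed.

Lemma psi_lt M w1 w2 : w1 ^+ 2 < M -> w2 ^+ 2 < M -> w1 < w2 -> psi M w1 < psi M w2.
Proof.
move=> h1 h2 l12; case: (lerP 0 w1) => p1; first exact: psi_lt_nneg.
case: (lerP w2 0) => p2.
  rewrite -ltrN2 -!psiN psi_lt_nneg ?sqrrN ?oppr_ge0 ?ltrN2 //.
rewrite (lt_trans (y := 0)) //.
  by rewrite /psi pmulr_llt0 // invr_gt0 sqrtr_gt0 subr_gt0.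
by rewrite /psi divr_gt0 // sqrtr_gt0 subr_gt0.
Qed.

Lemma div_sqrt_addr_ge0 (A B D1 D2 M : R) : 0 < D1 -> 0 < D2 ->
  0 < D1 * M - A ^+ 2 -> 0 < D2 * M - B ^+ 2 ->
  (0 <= A / Num.sqrt (D1 * M - A ^+ 2) + B / Num.sqrt (D2 * M - B ^+ 2))
  = (0 <= A * Num.sqrt D2 + B * Num.sqrt D1).
Proof.
move=> D10 D20 h1 h2.
have s1 : 0 < Num.sqrt D1 by rewrite sqrtr_gt0.
have s2 : 0 < Num.sqrt D2 by rewrite sqrtr_gt0.
have q1 : Num.sqrt D1 ^+ 2 = D1 by rewrite sqr_sqrtr // ltW.
have q2 : Num.sqrt D2 ^+ 2 = D2 by rewrite sqr_sqrtr // ltW.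
(* with [w_i := A_i / sqrt D_i] both terms become [psi M w_i] *)
set w1 := A / Num.sqrt D1; set w2 := B / Num.sqrt D2.
have e1 : D1 * M - A ^+ 2 = D1 * (M - w1 ^+ 2).
  by rewrite /w1 expr_div_n q1; field; rewrite gt_eqF.
have e2 : D2 * M - B ^+ 2 = D2 * (M - w2 ^+ 2).
  by rewrite /w2 expr_div_n q2; field; rewrite gt_eqF.
have m1 : w1 ^+ 2 < M by move: h1; rewrite e1 pmulr_rgt0 // subr_gt0.
have m2 : w2 ^+ 2 < M by move: h2; rewrite e2 pmulr_rgt0 // subr_gt0.
rewrite e1 e2 (sqrtrM _ (ltW D10)) (sqrtrM _ (ltW D20)) !invfM !mulrA -/w1 -/w2.
rewrite -[w1 / _]/(psi M w1) -[w2 / _]/(psi M w2).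
have -> : A * Num.sqrt D2 + B * Num.sqrt D1 = (w1 + w2) * (Num.sqrt D1 * Num.sqrt D2).
  by rewrite /w1 /w2; field; rewrite !gt_eqF.
rewrite pmulr_lge0 ?mulr_gt0 //.
rewrite (@odd_incr_addr_ge0 [pred w | w ^+ 2 < M] (psi M)) // => [x y | x].
  exact: psi_lt.
by rewrite !inE sqrrN psiN.
Qed.

Lemma faceL_hinge_sum {ri rj rk rl a b c d e : R} :
  0 < ri -> 0 < rj -> 0 < rk -> 0 < rl ->
  1 <= a -> 1 <= b -> 1 <= c -> 1 <= d -> 1 < e ->
  faceL (coshR ri) (coshR rj) (coshR rk) (sinhR ri) (sinhR rj) (sinhR rk) a d e / sinhR rk
    * Num.sqrt (Delta b c e)
  + faceL (coshR ri) (coshR rj) (coshR rl) (sinhR ri) (sinhR rj) (sinhR rl) b c e / sinhR rl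
    * Num.sqrt (Delta a d e)
  = sinhR ri * sinhR rj * (e ^+ 2 - 1) *
    (Num.sqrt (Delta c d (hinge_f a b c d e)) / tanhR ri
     + Num.sqrt (Delta a b (hinge_f a b c d e)) / tanhR rj
     - (Num.sqrt (Delta b c e) / tanhR rk + Num.sqrt (Delta a d e) / tanhR rl)).
Proof.
move=> ri0 rj0 rk0 rl0 a1 b1 c1 d1 e1.
have E0 : e ^+ 2 - 1 != 0 by rewrite gt_eqF // subr_gt0 exprn_egt1.
have cdf := sqrt_Delta_hinge a1 b1 c1 d1 e1.
have abf := sqrt_Delta_hinge_sym a1 b1 c1 d1 e1.
rewrite -[Num.sqrt (Delta c d _)](mulKf E0) -cdf -[Num.sqrt (Delta a b _)](mulKf E0) -abf.
rewrite /tanhR /faceL; field.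
by rewrite E0 !gt_eqF ?cosh_gt0 ?sinh_gt0.
Qed.

End HyperbolicHinge.

Arguments face_coord {R ri rj rk a d e} ri0 rj0 rk0 a0 d0 e1 {vi vj vk O rho}.

Theorem mainTheorem5 (R : realType)
  (ri rj rk rl a b c d e : R) (vi vj vk vl Ok Ol : vec3 R) (rhok rhol : R) :
  0 < ri -> 0 < rj -> 0 < rk -> 0 < rl ->
  1 < a -> 1 < b -> 1 < c -> 1 < d -> 1 < e ->
  inH2 vi -> inH2 vj -> inH2 vk -> inH2 vl ->
  hdist vi vj = elen ri rj e ->
  hdist vk vi = elen rk ri a ->
  hdist vi vl = elen ri rl b ->
  hdist vl vj = elen rl rj c ->
  hdist vj vk = elen rj rk d ->
  det3 vi vj vk * det3 vi vj vl < 0 ->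
  orthCircle vi vj vk ri rj rk Ok rhok ->
  orthCircle vi vj vl ri rj rl Ol rhol ->
  let f := (a * b + c * d + a * c * e + b * d * e
            + Num.sqrt (Delta a d e) * Num.sqrt (Delta b c e)) / (e ^+ 2 - 1) in
  (0 <= hsigned vi vj vk Ok + hsigned vi vj vl Ol <->
   Num.sqrt (Delta b c e) / tanhR rk + Num.sqrt (Delta a d e) / tanhR rl
   <= Num.sqrt (Delta c d f) / tanhR ri + Num.sqrt (Delta a b f) / tanhR rj).
Proof.
move=> ri0 rj0 rk0 rl0 a1 b1 c1 d1 e1 hi hj hk hl dij dki dil dlj djk side oK oL f.
have [a0 b0 c0 d0 e0] : [/\ 0 < a, 0 < b, 0 < c, 0 < d & 0 < e] by split; lra.
have dik : hdist vi vk = elen ri rk a by rewrite hdistC dki elenC.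
have djl : hdist vj vl = elen rj rl c by rewrite hdistC dlj elenC.
have dk0 : det3 vi vj vk != 0 by apply: contraTneq side => ->; rewrite mul0r ltxx.
have dl0 : det3 vi vj vl != 0 by apply: contraTneq side => ->; rewrite mulr0 ltxx.
have w0 := lcross_self_gt0 ri0 rj0 e0 hi hj dij.
have [hOk hOl] : inH2 Ok /\ inH2 Ol by case: oK; case: oL.
rewrite (hsignedE hOk w0 dk0) (hsignedE hOl w0 dl0) sgeodPhi_addr_ge0 //.
have [posk ->] := face_coord ri0 rj0 rk0 a0 d0 e1 hi hj hk dij dik djk oK dk0.
have [posl ->] := face_coord ri0 rj0 rl0 b0 c0 e1 hi hj hl dij dil djl oL dl0.
have E0 : 0 < e ^+ 2 - 1 by rewrite subr_gt0 exprn_egt1.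
have sE0 : 0 < Num.sqrt (e ^+ 2 - 1) by rewrite sqrtr_gt0.
have sij0 := mulr_gt0 (sinh_gt0 ri ri0) (sinh_gt0 rj rj0).
rewrite -mulrDr (pmulr_rge0 _ (mulr_gt0 sij0 sE0)) div_sqrt_addr_ge0 ?Delta_gt0 //.
rewrite (faceL_hinge_sum ri0 rj0 rk0 rl0 (ltW a1) (ltW b1) (ltW c1) (ltW d1) e1).
by rewrite (pmulr_rge0 _ (mulr_gt0 sij0 E0)) subr_ge0.
Qed.
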